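(* Let $q$ be a power of $2$ and let $\alpha,\beta \in \mathbb{F}_{q^2}$ be such that the line $\{(\alpha t+\beta, t)\}$ is not tangent to the Hermitian curve $x^q+x=y^{q+1}$. Let $\gamma = \beta+\beta^q$, let $\sigma_0,\dots,\sigma_q$ be the roots of $p(t) = t^{q+1} + \alpha^q t^q + \alpha t + \gamma$, and $P_k = \sum_{i=0}^q \sigma_i^k$. Then for all $0 \leq k < q$, $P_k = \alpha^{qk}$ and $P_{kq} = \alpha^k$. *)

From HB Require Import structures.
From mathcomp Require Import all_boot all_order all_algebra.
Set Implicit Arguments. Unset Strict Implicit. Unset Printing Implicit Defensive.
Import Order.TTheory GRing.Theory Num.Theory.
Local Open Scope ring_scope.

Section Hermitian.
Variable L : fieldType.

Definition in_Fq2 (q : nat) (a : L) : Prop := a ^+ (q ^ 2) = a.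

Definition herm_F (q : nat) (x y : L) : L := x ^+ q + x - y ^+ q.+1.
Definition herm_Fx (q : nat) (x y : L) : L := q%:R * x ^+ q.-1 + 1.
Definition herm_Fy (q : nat) (x y : L) : L := - (q.+1)%:R * y ^+ q.

(* The line t |-> (alpha t + beta, t), with direction vector (alpha, 1),
   is tangent to H at some point (over L) of the intersection. *)
Definition line_tangent_herm (q : nat) (alpha beta : L) : Prop :=
  exists t0 : L,
    herm_F q (alpha * t0 + beta) t0 = 0 /\
    alpha * herm_Fx q (alpha * t0 + beta) t0 + 1 * herm_Fy q (alpha * t0 + beta) t0 = 0.

Definition herm_poly (q : nat) (alpha gamma : L) : {poly L} :=
  'X ^+ q.+1 + (alpha ^+ q)%:P * 'X ^+ q + alpha%:P * 'X + gamma%:P.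

Definition power_sum (s : seq L) (k : nat) : L := \sum_(x <- s) x ^+ k.
End Hermitian.

From HB Require Import structures.
From mathcomp Require Import all_boot all_order all_algebra.
From mathcomp Require Import zify.
Set Implicit Arguments.
Unset Strict Implicit.
Unset Printing Implicit Defensive.

Import GRing.Theory.
Local Open Scope ring_scope.

(* Newton's identities come from p' = \sum_i p / (t - sigma_i): comparing
   the coefficients of t^(q-k) gives P_k + alpha^q P_(k-1) = [k = 0], because
   in characteristic 2 the derivative of p is t^q + alpha.  Hence
   P_k = alpha^(qk), and P_(kq) = P_k^q by the Frobenius morphism, which is
   alpha^(q^2 k) = alpha^k as alpha lies in F_(q^2). *)

Section PowerSums.
Variable R : fieldType.
Implicit Types (p : {poly R}) (s : seq R) (x : R).

Lemma deriv_prod_XsubC s :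
  let p := \prod_(x <- s) ('X - x%:P) in p^`() = \sum_(x <- s) p %/ ('X - x%:P).
Proof.
elim: s => [|a s IH] /=; first by rewrite !big_nil derivC.
rewrite !big_cons derivM derivXsubC mul1r IH mulKp ?polyXsubC_eq0 //.
rewrite mulr_sumr; congr (_ + _); apply: eq_big_seq => x xs.
by rewrite divp_mulA // dvdp_XsubCl root_prod_XsubC.
Qed.

Definition horner_quot p x : {poly R} :=
  \sum_(j < size p) p`_j *: \sum_(i < j) (x ^+ (j.-1 - i))%:P * 'X^i.

Lemma mul_XsubC_horner_quot p x :
  ('X - x%:P) * horner_quot p x = p - (p.[x])%:P.
Proof.
rewrite [in RHS]horner_coef -[in X in _ = X - _](coefK p) poly_def.
rewrite rmorph_sum -sumrB mulr_sumr; apply: eq_bigr => j _.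
have XsubC_sum : ('X - x%:P) * \sum_(i < j) (x ^+ (j.-1 - i))%:P * 'X^i
    = 'X^j - (x ^+ j)%:P.
  rewrite [in RHS]rmorphXn -[in RHS]opprB subrXX -mulNr opprB; congr (_ * _).
  by apply: eq_bigr => i _; rewrite rmorphXn.
by rewrite -scalerAr XsubC_sum scalerBr rmorphM mul_polyC.
Qed.

Lemma divp_XsubC_root p x : root p x -> p %/ ('X - x%:P) = horner_quot p x.
Proof.
move=> /eqP px0; have := mul_XsubC_horner_quot p x.
by rewrite px0 polyC0 subr0 => pE; rewrite -{1}pE mulKp ?polyXsubC_eq0.
Qed.

Lemma coef_horner_quot p x d :
  (horner_quot p x)`_d = \sum_(j < size p | (d < j)%N) p`_j * x ^+ (j.-1 - d).
Proof.
rewrite coef_sum [RHS]big_mkcond; apply: eq_bigr => j _; rewrite coefZ coef_sum.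
under eq_bigr do rewrite coefCM coefXn eq_sym mulr_natr mulrb.
rewrite -big_mkcond (big_ord1_eq _ (fun i => x ^+ (j.-1 - i))).
by case: ifP; rewrite ?mulr0.
Qed.

Lemma coef_deriv_prod_XsubC s d :
  let p := \prod_(x <- s) ('X - x%:P) in
  (p^`())`_d = \sum_(j < size p | (d < j)%N) p`_j * power_sum s (j.-1 - d).
Proof.
move=> p; rewrite deriv_prod_XsubC coef_sum.
under eq_big_seq => x xs do
  rewrite divp_XsubC_root ?root_prod_XsubC // coef_horner_quot.
by rewrite exchange_big; apply: eq_bigr => j _; rewrite mulr_sumr.
Qed.

Lemma power_sumMn_pchar s k n :
  [pchar R].-nat n -> power_sum s (k * n) = power_sum s k ^+ n.
Proof.
move=> n_pchar; have /andP[n_gt0 _] := n_pchar.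
have exprDn x y : (x + y) ^+ n = x ^+ n + y ^+ n := exprDn_pchar x y n_pchar.
rewrite /power_sum (big_morph _ exprDn (expr0n _ n)).
by rewrite eqn0Ngt n_gt0; apply: eq_bigr => x _; rewrite exprM.
Qed.

End PowerSums.

Section HermitianLine.
Variables (L : fieldType) (q : nat) (alpha gamma : L) (s : seq L).
Hypotheses (q_gt1 : (1 < q)%N) (q_eq0 : q%:R = 0 :> L).
Hypothesis herm_prod : herm_poly q alpha gamma = \prod_(x <- s) ('X - x%:P).

Let p := herm_poly q alpha gamma.

Lemma coef_herm_poly j :
  p`_j = (j == q.+1)%:R + alpha ^+ q * (j == q)%:R + alpha * (j == 1)%:R
         + gamma * (j == 0)%:R.
Proof.
rewrite /p /herm_poly !coefD !coefXn !coefCM coefXn coefX coefC.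
by case: (j == 0); rewrite ?mulr1 ?mulr0.
Qed.

Lemma coef_herm_poly_lead : p`_q.+1 = 1.
Proof.
rewrite coef_herm_poly eqxx.
have [/negPf-> /negPf-> /negPf->] : [/\ q.+1 != q, q.+1 != 1 & q.+1 != 0]%N.
  by split; apply/eqP; lia.
by rewrite !mulr0 !addr0.
Qed.

Lemma coef_herm_poly_q : p`_q = alpha ^+ q.
Proof.
rewrite coef_herm_poly eqxx.
have [/negPf-> /negPf-> /negPf->] : [/\ q != q.+1, q != 1 & q != 0]%N.
  by split; apply/eqP; lia.
by rewrite mulr1 !mulr0 !addr0 add0r.
Qed.

Lemma coef_herm_poly_mid j : (1 < j < q)%N -> p`_j = 0.
Proof.
move=> /andP[j_gt1 j_ltq]; rewrite coef_herm_poly.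
have [/negPf-> /negPf-> /negPf-> /negPf->] :
    [/\ j != q.+1, j != q, j != 1 & j != 0]%N by split; apply/eqP; lia.
by rewrite !mulr0 !addr0.
Qed.

Lemma size_herm_poly : size p = q.+2.
Proof.
apply/anti_leq/andP; split.
  apply/leq_sizeP => j le_q2_j; rewrite coef_herm_poly.
  have [/negPf-> /negPf-> /negPf-> /negPf->] :
      [/\ j != q.+1, j != q, j != 1 & j != 0]%N by split; apply/eqP; lia.
  by rewrite !mulr0 !addr0.
rewrite ltnNge; apply/negP => /leq_sizeP/(_ _ (leqnn _)).
by rewrite coef_herm_poly_lead; apply/eqP/oner_neq0.
Qed.

Lemma deriv_herm_poly : p^`() = 'X^q + alpha%:P.
Proof.
have mulrn_q_eq0 (r : {poly L}) : r *+ q = 0.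
  by rewrite -mulr_natr -polyC_natr q_eq0 mulr0.
rewrite /p /herm_poly !derivD derivC !deriv_mulC !derivXn derivX mulrSr.
by rewrite !mulrn_q_eq0 mulr0 mulr1 !addr0 add0r.
Qed.

Lemma herm_power_sum_newton k : (k < q)%N ->
  power_sum s k + (if k is k'.+1 then alpha ^+ q * power_sum s k' else 0)
  = (k == 0%N)%:R.
Proof.
move=> k_ltq; have /= := coef_deriv_prod_XsubC s (q - k).
rewrite -herm_prod -/p deriv_herm_poly size_herm_poly coefD coefXn coefC.
have [/negPf-> ->] : (q - k != 0)%N /\ (q - k == q)%N = (k == 0%N).
  by split; lia.
rewrite addr0 => ->; rewrite big_mkcond !big_ord_recr /=.
rewrite big1 => [|j _]; last first.
  case: ifP => // lt_j; rewrite coef_herm_poly_mid ?mul0r //.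
  by have := ltn_ord j; lia.
have [-> ->] : (q - k < q.+1)%N /\ (q - (q - k))%N = k by split; lia.
rewrite add0r coef_herm_poly_lead coef_herm_poly_q mul1r addrC.
case: k k_ltq => [|k] k_ltq; first by rewrite subn0 ltnn.
have [lt_q_k eq_k] : (q - k.+1 < q)%N /\ (q.-1 - (q - k.+1) = k)%N.
  by split; lia.
by rewrite lt_q_k eq_k.
Qed.

End HermitianLine.

Theorem mainTheorem5 (L : fieldType) (m : nat) (alpha beta : L)
    (s : seq L) :
  2%N \in [pchar L] -> (0 < m)%N ->
  let q := (2 ^ m)%N in
  in_Fq2 q alpha -> in_Fq2 q beta ->
  ~ line_tangent_herm q alpha beta ->
  let gamma := beta + beta ^+ q in
  herm_poly q alpha gamma = \prod_(sigma <- s) ('X - sigma%:P) ->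
  forall k : nat, (k < q)%N ->
    power_sum s k = alpha ^+ (q * k) /\ power_sum s (k * q) = alpha ^+ k.
Proof.
(* The hypotheses on beta and non-tangency only make the roots distinct;
   power sums count roots with multiplicity. *)
move=> pchar2 m_gt0 q alpha_Fq2 _ _ gamma herm_prod.
have q_gt1 : (1 < q)%N by rewrite -{1}(expn0 2) ltn_exp2l.
have q_eq0 : q%:R = 0 :> L by apply/eqP; rewrite -(dvdn_pcharf pchar2) dvdn_exp.
have q_pchar : [pchar L].-nat q.
  by rewrite pnatX (pnatE _ (isT : prime 2)) pchar2.
have power_sum_lt_q k : (k < q)%N -> power_sum s k = alpha ^+ (q * k).
  elim: k => [|k IHk] k_ltq.
    have := herm_power_sum_newton q_gt1 q_eq0 herm_prod k_ltq.
    by rewrite addr0 muln0 expr0 => ->.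
  have := herm_power_sum_newton q_gt1 q_eq0 herm_prod k_ltq.
  rewrite /= (IHk (ltnW k_ltq)) => /eqP.
  by rewrite addr_eq0 oppr_pchar2 // => /eqP->; rewrite -exprD mulnS.
move=> k k_ltq; split; first exact: power_sum_lt_q.
rewrite power_sumMn_pchar // power_sum_lt_q // -exprM mulnAC mulnn exprM.
by rewrite alpha_Fq2.
Qed.
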